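(* The bi-immune symmetric group $G_{\mathfrak{B}}$ is dense in $\mathrm{Sym}(\mathbb{N})$ with respect to the topology of pointwise convergence (equivalently, with respect to the metric $d$ below).
   Context: $\mathbb{N}$ denotes the non-negative integers, and $\mathrm{Sym}(\mathbb{N})$ the group of all permutations of $\mathbb{N}$ under composition ($g \circ f$ means apply $f$ first). For $\sigma, \tau \in \mathrm{Sym}(\mathbb{N})$ let $\rho(\sigma,\tau) = 0$ if $\sigma = \tau$, and otherwise $\rho(\sigma,\tau) = 2^{-j}$ where $j$ is the least $i$ with $\sigma(i) \neq \tau(i)$; set $d(\sigma,\tau) = \max\{\rho(\sigma,\tau), \rho(\sigma^{-1},\tau^{-1})\}$, a complete metric inducing the pointwise convergence topology. For $i \in \mathbb{N}$, $\sigma_{(i)}$ is the permutation swapping $i$ and $i+1$ and fixing all other numbers. For $A \subseteq \mathbb{N}$ with increasing enumeration $a_0 < a_1 < \cdots$, define $\sigma_A(x) = \lim_{n \to \infty} (\sigma_{(a_0)} \circ \sigma_{(a_1)} \circ \cdots \circ \sigma_{(a_n)})(x)$ (eventually constant for each $x$). A set $A$ is immune if it is infinite and contains no infinite computably enumerable subset; $A$ is bi-immune if both $A$ and $\mathbb{N} - A$ are immune. For bi-immune $A$, $\sigma_A$ is a permutation of $\mathbb{N}$. The bi-immune symmetric group $G_{\mathfrak{B}}$ is the subgroup of $\mathrm{Sym}(\mathbb{N})$ generated by $\{\sigma_A : A \text{ bi-immune}\}$. *)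

From Stdlib Require Import Arith List.
Import ListNotations.

(** Syntax of partial recursive function terms (arity left implicit;
    arguments are passed as a list of naturals). *)
Inductive recf : Type :=
| RZero : recf
| RSucc : recf
| RProj : nat -> recf
| RComp : recf -> list recf -> recf
| RRec  : recf -> recf -> recf        (* primitive recursion on first arg *)
| RMin  : recf -> recf.               (* unbounded minimisation on first arg *)

Inductive eval : recf -> list nat -> nat -> Prop :=
| ev_zero : forall args, eval RZero args 0
| ev_succ : forall x rest, eval RSucc (x :: rest) (S x)
| ev_proj : forall i args, i < length args -> eval (RProj i) args (nth i args 0)
| ev_comp : forall f gs args ys y,
    evals gs args ys -> eval f ys y -> eval (RComp f gs) args y
| ev_rec0 : forall f g rest y, eval f rest y -> eval (RRec f g) (0 :: rest) y
| ev_recS : forall f g n rest r y,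
    eval (RRec f g) (n :: rest) r -> eval g (n :: r :: rest) y ->
    eval (RRec f g) (S n :: rest) y
| ev_min : forall f args y,
    eval f (y :: args) 0 ->
    (forall z, z < y -> exists v, v <> 0 /\ eval f (z :: args) v) ->
    eval (RMin f) args y
with evals : list recf -> list nat -> list nat -> Prop :=
| evs_nil : forall args, evals [] args []
| evs_cons : forall g gs args y ys,
    eval g args y -> evals gs args ys -> evals (g :: gs) args (y :: ys).

Definition ce (B : nat -> Prop) : Prop :=
  exists f : recf, forall x, B x <-> exists y, eval f [x] y.

Definition infinite_set (B : nat -> Prop) : Prop :=
  forall n, exists m, n <= m /\ B m.

Definition immune (A : nat -> Prop) : Prop :=
  infinite_set A /\
  ~ (exists B : nat -> Prop, ce B /\ infinite_set B /\ (forall x, B x -> A x)).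

Definition bi_immune (A : nat -> bool) : Prop :=
  immune (fun x => A x = true) /\ immune (fun x => A x = false).

Definition swap (i x : nat) : nat :=
  if Nat.eqb x i then S i else if Nat.eqb x (S i) then i else x.

(** [partial_prod A N] = sigma_(a_0) o sigma_(a_1) o ... o sigma_(a_k), where
    a_0 < ... < a_k are the elements of A that are <= N
    (the rightmost factor is applied first). *)
Fixpoint partial_prod (A : nat -> bool) (N : nat) : nat -> nat :=
  match N with
  | 0 => if A 0 then swap 0 else (fun x => x)
  | S M => if A (S M) then (fun x => partial_prod A M (swap (S M) x))
           else partial_prod A M
  end.

Definition is_sigma (A : nat -> bool) (s : nat -> nat) : Prop :=
  forall x, exists N0, forall N, N0 <= N -> partial_prod A N x = s x.

Definition bi_immune_gen (s : nat -> nat) : Prop :=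
  exists A, bi_immune A /\ is_sigma A s.

Definition inverses (f g : nat -> nat) : Prop :=
  (forall x, f (g x) = x) /\ (forall x, g (f x) = x).

Inductive in_gen (S : (nat -> nat) -> Prop) : (nat -> nat) -> Prop :=
| gen_id : in_gen S (fun x => x)
| gen_mul : forall s g, S s -> in_gen S g -> in_gen S (fun x => s (g x))
| gen_mulinv : forall s s' g, S s -> inverses s s' -> in_gen S g ->
    in_gen S (fun x => s' (g x)).

Definition G_B (g : nat -> nat) : Prop := in_gen bi_immune_gen g.

From Stdlib Require Import Arith List Lia ClassicalEpsilon Cantor.
Import ListNotations.

(* Since G_B is closed under composition, it suffices to show that every
   adjacent transposition sigma_(i) lies in G_B: a permutation tau agrees on
   {0,...,m-1} with a finite product of adjacent transpositions (move each
   tau(k) into place by a chain of swaps above k), and the inverse of such an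
   approximation then agrees with tau^-1 on any prescribed finite set.

   For sigma_(i) we take a bi-immune set A disjoint from {0,...,i} and put
   B = A u {i}; then sigma_B = sigma_(i) o sigma_A, so sigma_(i) = sigma_B o
   sigma_A^-1.  The file therefore establishes, in order:
   (1) elementary facts on the swaps sigma_(i);
   (2) sigma_A exists, with an inverse, when N - A is infinite;
   (3) a set C splitting every infinite c.e. set (a diagonal construction over
       an enumeration of all programs), so that every finite variant of C is
       bi-immune;
   (4) sigma_(i) in G_B, then all finite products of swaps; (5) the theorem. *)

(* Case analysis on the [Nat.eqb] tests of the goal, innermost first (a test
   whose argument still contains a conditional is postponed). *)
Ltac case_eqb :=
  repeat (match goal with
          | |- context [Nat.eqb ?a ?b] =>
              lazymatch a with
              | context [if _ then _ else _] => fail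
              | _ => destruct (Nat.eqb_spec a b)
              end
          end; cbn beta iota);
  try lia.

Lemma swap_invol i x : swap i (swap i x) = x.
Proof. unfold swap; case_eqb. Qed.

Lemma swap_below i x : x < i -> swap i x = x.
Proof. intro; unfold swap; case_eqb. Qed.

Lemma swap_above i x : S i < x -> swap i x = x.
Proof. intro; unfold swap; case_eqb. Qed.

Lemma swap_le i x : x <= S i -> swap i x <= S i.
Proof. intro; unfold swap; case_eqb. Qed.

Lemma swap_self i : swap i i = S i.
Proof. unfold swap; case_eqb. Qed.

Fixpoint partial_prod_inv (A : nat -> bool) (N : nat) : nat -> nat :=
  match N with
  | 0 => if A 0 then swap 0 else (fun x => x)
  | S M => if A (S M) then (fun x => swap (S M) (partial_prod_inv A M x))
           else partial_prod_inv A M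
  end.

Lemma partial_prod_inverses A N : inverses (partial_prod A N) (partial_prod_inv A N).
Proof.
  induction N as [|N [IH1 IH2]]; simpl.
  - destruct (A 0); split; intro; auto using swap_invol.
  - destruct (A (S N)); split; intro x; simpl; auto.
    + rewrite swap_invol; apply IH1.
    + rewrite IH2; apply swap_invol.
Qed.

(* [partial_prod A N x] no longer changes once [N >= x]: later swaps act
   above [x] and are applied first. *)
Lemma partial_prod_stable A N x : x <= N -> partial_prod A N x = partial_prod A x x.
Proof.
  induction N as [|N IH]; intro HxN.
  - replace x with 0 by lia; reflexivity.
  - destruct (Nat.eq_dec x (S N)) as [->|Hne]; [reflexivity|].
    simpl; destruct (A (S N)); rewrite <- IH by lia; try reflexivity.
    rewrite swap_below by lia; reflexivity.
Qed.

Lemma partial_prod_inv_above A M x : S M < x -> partial_prod_inv A M x = x.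
Proof.
  induction M as [|M IH]; intro Hx; simpl.
  - destruct (A 0); auto; apply swap_above; lia.
  - destruct (A (S M)); rewrite IH by lia; auto; apply swap_above; lia.
Qed.

Lemma partial_prod_inv_le A M x : x <= S M -> partial_prod_inv A M x <= S M.
Proof.
  induction M as [|M IH]; intro Hx; simpl.
  - destruct (A 0); auto; apply swap_le; lia.
  - assert (Hle : partial_prod_inv A M x <= S (S M)).
    { destruct (Nat.eq_dec x (S (S M))) as [->|Hne].
      - rewrite partial_prod_inv_above; lia.
      - specialize (IH ltac:(lia)); lia. }
    destruct (A (S M)); [apply swap_le|]; exact Hle.
Qed.

(* Once a point [c > y] outside [A] is passed, [partial_prod_inv A N y] no
   longer changes: the image stays below [c] and later swaps act above it. *)
Lemma partial_prod_inv_stable A c y N :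
  A c = false -> y < c -> c <= N -> partial_prod_inv A N y = partial_prod_inv A c y.
Proof.
  intros Hc Hy HcN; induction HcN as [|N HcN IH]; [reflexivity|].
  assert (Hlt : partial_prod_inv A c y <= c).
  { destruct c as [|c]; [lia|]. simpl; rewrite Hc. apply partial_prod_inv_le; lia. }
  simpl; destruct (A (S N)); rewrite IH; auto. apply swap_below; lia.
Qed.

Lemma sigma_exists A : (forall m, exists c, m < c /\ A c = false) ->
  exists s s', is_sigma A s /\ inverses s s'.
Proof.
  intro HA.
  set (zero_above := fun y => epsilon (inhabits 0) (fun c => y < c /\ A c = false)).
  assert (Hzero : forall y, y < zero_above y /\ A (zero_above y) = false)
    by (intro y; apply (epsilon_spec (inhabits 0)), HA).
  set (s' := fun y => partial_prod_inv A (zero_above y) y).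
  assert (Hs' : forall y N, zero_above y <= N -> partial_prod_inv A N y = s' y).
  { intros y N HN. apply partial_prod_inv_stable; apply Hzero || exact HN. }
  exists (fun x => partial_prod A x x), s'.
  split; [|split].
  - intro x; exists x; intros; apply partial_prod_stable; auto.
  - intro y. set (N := Nat.max (s' y) (zero_above y)).
    rewrite <- (partial_prod_stable A N) by lia.
    rewrite <- (Hs' y N) by lia. apply partial_prod_inverses.
  - intro x. set (N := Nat.max x (zero_above (partial_prod A x x))).
    rewrite <- (Hs' _ N) by lia.
    rewrite <- (partial_prod_stable A N x) by lia. apply partial_prod_inverses.
Qed.

Lemma partial_prod_empty A N x : (forall j, j <= N -> A j = false) -> partial_prod A N x = x.
Proof.
  revert x; induction N as [|N IH]; intros x HA; simpl.
  - rewrite HA by lia; reflexivity.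
  - rewrite HA by lia. apply IH; intros; apply HA; lia.
Qed.

Lemma partial_prod_add_min A B i :
  (forall j, j <= i -> A j = false) -> B i = true -> (forall j, j <> i -> B j = A j) ->
  forall N x, i <= N -> partial_prod B N x = swap i (partial_prod A N x).
Proof.
  intros HA HBi HB N; induction N as [|N IH]; intros x HN.
  - replace i with 0 in * by lia. simpl. rewrite HBi, HA; auto.
  - destruct (Nat.eq_dec i (S N)) as [->|Hne]; simpl.
    + rewrite HBi, HA by lia.
      rewrite !partial_prod_empty; auto;
        intros j Hj; try rewrite HB by lia; apply HA; lia.
    + rewrite HB by lia. destruct (A (S N)); apply IH; lia.
Qed.

Lemma enumeration_from_code (T : Type) (t0 : T) (code : T -> nat) :
  (forall t u, code t = code u -> t = u) ->
  exists e : nat -> T, forall t m, exists k, m <= k /\ e k = t.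
Proof.
  intro Hinj.
  exists (fun k => epsilon (inhabits t0) (fun t => code t = fst (of_nat k))).
  intros t m. exists (to_nat (code t, m)). split.
  - pose proof (to_nat_non_decreasing (code t) m); lia.
  - apply Hinj.
    rewrite (epsilon_spec (inhabits t0) (fun u => code u = fst (of_nat _)))
      by (exists t; rewrite cancel_of_to; reflexivity).
    rewrite cancel_of_to; reflexivity.
Qed.

Fixpoint recf_nested_ind (P : recf -> Prop) (HZ : P RZero) (HS : P RSucc)
  (HP : forall i, P (RProj i))
  (HC : forall f gs, P f -> Forall P gs -> P (RComp f gs))
  (HR : forall f g, P f -> P g -> P (RRec f g))
  (HM : forall f, P f -> P (RMin f)) (r : recf) {struct r} : P r :=
  let IH := recf_nested_ind P HZ HS HP HC HR HM in
  match r with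
  | RZero => HZ
  | RSucc => HS
  | RProj i => HP i
  | RComp f gs =>
      HC f gs (IH f)
        ((fix all (l : list recf) : Forall P l :=
            match l with
            | [] => Forall_nil P
            | g :: l' => Forall_cons g (IH g) (all l')
            end) gs)
  | RRec f g => HR f g (IH f) (IH g)
  | RMin f => HM f (IH f)
  end.

(* Cantor pairing, kept opaque so that simplification never unfolds it. *)
Definition cantor_pair (a b : nat) : nat := to_nat (a, b).

Lemma cantor_pair_inj a b c d : cantor_pair a b = cantor_pair c d -> a = c /\ b = d.
Proof. unfold cantor_pair; intro H; apply to_nat_inj in H; injection H; auto. Qed.

Global Opaque cantor_pair.

Fixpoint code (r : recf) : nat :=
  match r with
  | RZero => cantor_pair 0 0
  | RSucc => cantor_pair 1 0
  | RProj i => cantor_pair 2 i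
  | RComp f gs =>
      cantor_pair 3 (cantor_pair (code f)
        ((fix code_list (l : list recf) : nat :=
            match l with [] => 0 | g :: l' => S (cantor_pair (code g) (code_list l')) end) gs))
  | RRec f g => cantor_pair 4 (cantor_pair (code f) (code g))
  | RMin f => cantor_pair 5 (code f)
  end.

Lemma code_inj : forall r1 r2, code r1 = code r2 -> r1 = r2.
Proof.
  intro r1; induction r1 as [| | |f gs IHf IHgs|f g IHf IHg|f IHf] using recf_nested_ind;
    intros r2 Heq; destruct r2; cbn [code] in Heq;
    apply cantor_pair_inj in Heq; destruct Heq as [Htag Hargs]; try discriminate; auto.
  - apply cantor_pair_inj in Hargs; destruct Hargs as [Hf Hgs]. f_equal; auto.
    clear IHf Hf Htag. revert l Hgs.
    induction IHgs as [|g gs IHg _ IHgs]; intros [|g' gs'] Hgs; simpl in Hgs;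
      try discriminate; auto.
    injection Hgs as Hgs. apply cantor_pair_inj in Hgs; destruct Hgs. f_equal; auto.
  - apply cantor_pair_inj in Hargs; destruct Hargs. f_equal; auto.
  - f_equal; auto.
Qed.

Definition element_above (P : nat -> Prop) (m : nat) : nat :=
  m + epsilon (inhabits 0) (fun d => P (m + d)).

Lemma element_above_spec P m : infinite_set P -> m <= element_above P m /\ P (element_above P m).
Proof.
  intro HP. split; [unfold element_above; lia|].
  apply (epsilon_spec (inhabits 0) (fun d => P (m + d))).
  destruct (HP m) as [x [Hx HPx]]. exists (x - m). replace (m + (x - m)) with x by lia; exact HPx.
Qed.

Section Splitting.

(* A sequence of sets of naturals; we build [C] such that every infinite
   [D k] meets both [C] and its complement beyond [k]. *)
Variable D : nat -> nat -> Prop.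

(* Stage [k] starts at [start k] and chooses [inside k < outside k] in
   [D k]; the next stage starts beyond [outside k]. *)
Fixpoint start (k : nat) : nat :=
  match k with
  | 0 => 0
  | S k' => S (element_above (D k') (S (element_above (D k') (start k'))))
  end.

Definition inside (k : nat) : nat := element_above (D k) (start k).
Definition outside (k : nat) : nat := element_above (D k) (S (inside k)).

Lemma stage_order k :
  start k <= inside k /\ inside k < outside k /\ outside k < start (S k).
Proof.
  unfold outside, inside; simpl; unfold element_above; lia.
Qed.

Lemma start_mono j k : j <= k -> start j <= start k.
Proof.
  induction 1 as [|k _ IH]; auto. pose proof (stage_order k); lia.
Qed.

Lemma start_ge k : k <= start k.
Proof. induction k as [|k IH]; [lia|]. pose proof (stage_order k); lia. Qed.

Definition splitter (z : nat) : bool :=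
  if excluded_middle_informative (exists k, inside k = z) then true else false.

Lemma outside_not_inside j k : inside j <> outside k.
Proof.
  intro Heq. pose proof (stage_order j); pose proof (stage_order k).
  destruct (lt_eq_lt_dec j k) as [[Hlt| ->]|Hgt].
  - pose proof (start_mono (S j) k Hlt); lia.
  - lia.
  - pose proof (start_mono (S k) j Hgt); lia.
Qed.

Lemma splitter_spec k : infinite_set (D k) ->
  (exists x, k <= x /\ D k x /\ splitter x = true) /\
  (exists y, k <= y /\ D k y /\ splitter y = false).
Proof.
  intro Hinf. pose proof (start_ge k); pose proof (stage_order k).
  split.
  - exists (inside k). split; [lia|split].
    + apply (element_above_spec (D k)), Hinf.
    + unfold splitter; destruct excluded_middle_informative as [_|Hno]; auto.
      exfalso; apply Hno; eauto.
  - exists (outside k). split; [lia|split].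
    + apply (element_above_spec (D k)), Hinf.
    + unfold splitter; destruct excluded_middle_informative as [[j Hj]|_]; auto.
      exfalso; exact (outside_not_inside j k Hj).
Qed.

End Splitting.

Definition splits_ce (C : nat -> bool) : Prop :=
  forall B, ce B -> infinite_set B -> forall m,
    (exists x, m <= x /\ B x /\ C x = true) /\ (exists y, m <= y /\ B y /\ C y = false).

Lemma splitting_set_exists : exists C, splits_ce C.
Proof.
  destruct (enumeration_from_code recf RZero code code_inj) as [e He].
  set (D := fun k x => exists y, eval (e k) [x] y).
  exists (splitter D). intros B [f Hf] HB m.
  destruct (He f m) as [k [Hmk Hk]].
  assert (HBD : forall x, B x <-> D k x) by (intro x; unfold D; rewrite Hk; apply Hf).
  assert (HD : infinite_set (D k)).
  { intro n; destruct (HB n) as [x [? ?]]; exists x; split; [|apply HBD]; auto. }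
  destruct (splitter_spec D k HD) as [[x [? [? ?]]] [y [? [? ?]]]].
  split; [exists x | exists y]; repeat split; try apply HBD; auto; lia.
Qed.

(* Every set agreeing with a c.e.-splitting set beyond some point is
   bi-immune: the set of all naturals is c.e., and an infinite c.e. subset of
   either side would be split. *)
Lemma splitting_variant_bi_immune C i A :
  splits_ce C -> (forall j, i < j -> A j = C j) -> bi_immune A.
Proof.
  intros HC HA.
  assert (Hall : ce (fun _ => True) /\ infinite_set (fun _ => True)).
  { split.
    - exists RZero; split; intros; [exists 0; constructor|exact I].
    - intro n; exists n; auto. }
  destruct Hall as [Hce Hinf].
  split; split.
  - intro n. destruct (HC _ Hce Hinf (n + S i)) as [[x [Hx [_ Hc]]] _].
    exists x; split; [lia|]. rewrite HA by lia; exact Hc.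
  - intros [B [HBce [HBinf Hsub]]].
    destruct (HC B HBce HBinf (S i)) as [_ [y [Hy [HBy Hc]]]].
    specialize (Hsub y HBy). rewrite HA in Hsub by lia. congruence.
  - intro n. destruct (HC _ Hce Hinf (n + S i)) as [_ [x [Hx [_ Hc]]]].
    exists x; split; [lia|]. rewrite HA by lia; exact Hc.
  - intros [B [HBce [HBinf Hsub]]].
    destruct (HC B HBce HBinf (S i)) as [[y [Hy [HBy Hc]]] _].
    specialize (Hsub y HBy). rewrite HA in Hsub by lia. congruence.
Qed.

Definition realized_in_G_B (p : nat -> nat) : Prop :=
  exists g g', G_B g /\ inverses g g' /\ forall x, g x = p x.

Lemma in_gen_comp S h g : in_gen S h -> in_gen S g -> in_gen S (fun x => h (g x)).
Proof.
  induction 1 as [|s h Hs _ IH|s s' h Hs Hss' _ IH]; intro Hg.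
  - exact Hg.
  - exact (gen_mul S s _ Hs (IH Hg)).
  - exact (gen_mulinv S s s' _ Hs Hss' (IH Hg)).
Qed.

Lemma inverses_comp f f' g g' :
  inverses f f' -> inverses g g' -> inverses (fun x => f (g x)) (fun x => g' (f' x)).
Proof.
  intros [Hf1 Hf2] [Hg1 Hg2]; split; intro x; [rewrite Hg1 | rewrite Hf2]; auto.
Qed.

Lemma realized_comp p q :
  realized_in_G_B p -> realized_in_G_B q -> realized_in_G_B (fun x => p (q x)).
Proof.
  intros [f [f' [Hf [Hff' Hfp]]]] [g [g' [Hg [Hgg' Hgq]]]].
  exists (fun x => f (g x)), (fun x => g' (f' x)).
  split; [apply in_gen_comp; auto|split; [apply inverses_comp; auto|]].
  intro x; rewrite Hgq; apply Hfp.
Qed.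

(* sigma_(i) = sigma_B o sigma_A^-1 with A a bi-immune set missing
   {0,...,i} and B = A u {i}. *)
Lemma swap_realized i : realized_in_G_B (swap i).
Proof.
  destruct splitting_set_exists as [C HC].
  set (A := fun j => if j <=? i then false else C j).
  set (B := fun j => if j =? i then true else A j).
  assert (HAC : forall j, i < j -> A j = C j)
    by (intros j Hj; unfold A; destruct (Nat.leb_spec j i); auto; lia).
  assert (HA : bi_immune A) by exact (splitting_variant_bi_immune C i A HC HAC).
  assert (HB : bi_immune B).
  { apply (splitting_variant_bi_immune C i B HC). intros j Hj; unfold B.
    destruct (Nat.eqb_spec j i); [lia|auto]. }
  assert (HA_low : forall j, j <= i -> A j = false)
    by (intros j Hj; unfold A; destruct (Nat.leb_spec j i); auto; lia).
  assert (HA_zeros : forall m, exists c, m < c /\ A c = false).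
  { intro m. destruct HA as [_ [Hinf _]]. destruct (Hinf (S m)) as [c [? ?]].
    exists c; split; auto; lia. }
  destruct (sigma_exists A HA_zeros) as [s [s' [Hs Hss']]].
  assert (HsB : is_sigma B (fun x => swap i (s x))).
  { intro x. destruct (Hs x) as [N0 HN0]. exists (Nat.max N0 i). intros N HN.
    rewrite (partial_prod_add_min A B i); auto; try lia.
    - rewrite HN0; auto; lia.
    - unfold B; rewrite Nat.eqb_refl; reflexivity.
    - intros j Hj; unfold B. destruct (Nat.eqb_spec j i); auto; lia. }
  assert (Hinv : inverses (fun x => swap i (s x)) (fun x => s' (swap i x)))
    by exact (inverses_comp _ _ _ _ (conj (swap_invol i) (swap_invol i)) Hss').
  exists (fun x => swap i (s (s' x))), (fun x => s (s' (swap i x))).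
  split; [|split].
  - apply (gen_mul _ (fun x => swap i (s x)) (fun x => s' x)).
    + exists B; auto.
    + apply (gen_mulinv _ s s' (fun x => x)); [exists A; auto|exact Hss'|constructor].
  - apply (inverses_comp _ _ _ _ Hinv). destruct Hss'; split; auto.
  - intro x; destruct Hss' as [Hs1 _]; rewrite Hs1; reflexivity.
Qed.

Fixpoint swaps (L : list nat) (x : nat) : nat :=
  match L with [] => x | a :: L' => swap a (swaps L' x) end.

Lemma swaps_realized L : realized_in_G_B (swaps L).
Proof.
  induction L as [|a L IH].
  - exists (fun x => x), (fun x => x). repeat split; constructor.
  - exact (realized_comp _ _ (swap_realized a) IH).
Qed.

Lemma swaps_app L1 L2 x : swaps (L1 ++ L2) x = swaps L1 (swaps L2 x).
Proof. induction L1; simpl; congruence. Qed.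

Lemma swaps_rev L : inverses (swaps L) (swaps (rev L)).
Proof.
  induction L as [|a L [IH1 IH2]]; split; intro x; simpl; auto;
    rewrite swaps_app; simpl.
  - rewrite IH1; apply swap_invol.
  - rewrite swap_invol; apply IH2.
Qed.

Fixpoint chain (m k : nat) : list nat :=
  match k with 0 => [] | S k' => (m + k') :: chain m k' end.

Lemma chain_start m k : swaps (chain m k) m = m + k.
Proof. induction k as [|k IH]; simpl; [lia|]. rewrite IH, swap_self; lia. Qed.

Lemma chain_below m k x : x < m -> swaps (chain m k) x = x.
Proof. intro; induction k as [|k IH]; simpl; auto. rewrite IH; apply swap_below; lia. Qed.

(* Every permutation agrees on {0,...,m-1} with a product of swaps: having
   matched [tau] below [m], the point [q] sent to [tau m] lies at or above
   [m], and a chain carrying [m] to [q] leaves the smaller points fixed. *)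
Lemma swaps_approx tau tau' : inverses tau tau' ->
  forall m, exists L, forall x, x < m -> swaps L x = tau x.
Proof.
  intros [Htau1 Htau2] m. induction m as [|m [L HL]].
  - exists []; intros; lia.
  - set (q := swaps (rev L) (tau m)).
    assert (Hq : swaps L q = tau m) by apply swaps_rev.
    assert (Hmq : m <= q).
    { destruct (le_lt_dec m q) as [|Hlt]; auto. exfalso.
      rewrite HL in Hq by exact Hlt.
      apply (f_equal tau') in Hq. rewrite !Htau2 in Hq. lia. }
    exists (L ++ chain m (q - m)). intros x Hx. rewrite swaps_app.
    destruct (Nat.eq_dec x m) as [->|Hne].
    + rewrite chain_start. replace (m + (q - m)) with q by lia. exact Hq.
    + rewrite chain_below by lia. apply HL; lia.
Qed.

Lemma finite_bound (t : nat -> nat) n : exists m, n <= m /\ forall i, i < n -> t i < m.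
Proof.
  induction n as [|n [m [Hnm Hm]]]; [exists 0; split; intros; lia|].
  exists (S (Nat.max m (t n))). split; [lia|].
  intros i Hi. destruct (Nat.eq_dec i n) as [->|Hne]; [lia|].
  specialize (Hm i ltac:(lia)); lia.
Qed.

(* Approximate [tau] by a product of swaps on a set containing {0,...,n-1}
   and [tau'] of it; the inverse then agrees with [tau'] below [n]. *)
Theorem mainTheorem8 :
  forall (tau tau' : nat -> nat), inverses tau tau' ->
  forall n : nat,
  exists g g' : nat -> nat,
    G_B g /\ inverses g g' /\
    (forall i, i < n -> g i = tau i /\ g' i = tau' i).
Proof.
  intros tau tau' Htau n.
  destruct (finite_bound tau' n) as [m [Hnm Hbound]].
  destruct (swaps_approx tau tau' Htau m) as [L HL].
  destruct (swaps_realized L) as [g [g' [Hg [[Hgg' Hg'g] HgL]]]].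
  exists g, g'. split; [exact Hg|split; [split; assumption|]].
  intros i Hi.
  assert (Hg_tau' : g (tau' i) = i).
  { rewrite HgL, HL by (apply Hbound; exact Hi). apply (proj1 Htau). }
  split.
  - rewrite HgL; apply HL; lia.
  - rewrite <- Hg_tau' at 1. apply Hg'g.
Qed.
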